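(* Let $n\ge1$, let $L_1,\dots,L_N$ be complex $n\times n$ matrices, let $\pi_1,\dots,\pi_n$ be mutually orthogonal rank-one orthogonal projectors on $\mathbb{C}^n$, let $w_{jk}:=\sum_{\alpha=1}^N \mathrm{Tr}(\pi_j L_\alpha\pi_k L_\alpha^\dagger)$ for $j\neq k$, and let $\Omega$ be the matrix with $\Omega_{jk}=w_{jk}$ ($j\ne k$) and $\Omega_{kk}=-\sum_{l\ne k}w_{lk}$. Let $N_1,\dots,N_{n_B}$ be the vertex sets of the basins of $G_\Omega$ and $N_B=\bigcup_\eta N_\eta$. Then the kernel of $\Omega^T$ is spanned by the linearly independent vectors $$\kappa_\eta := \Big(\sum_{\tau\in T_B(G_\Omega)} W(\tau)\Big)\sum_{j\in N_\eta} e_j + \sum_{l\notin N_B}\ \sum_{\tau\in T_B(G_\Omega,\eta,l)} W(\tau)\, e_l,\qquad \eta=1,\dots,n_B.$$ Moreover, if $\Omega$ is time-independent and $\Lambda(t)\in\mathbb{R}^n$ solves $\frac{d}{dt}\Lambda=\Omega\Lambda$, then each quantity $\kappa_\eta^T\Lambda(t)$ is constant in $t$.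
   Context: $G_\Omega$ is the directed graph on $\{1,\dots,n\}$ with a directed edge from $k$ to $j$ of weight $w_{jk}$ for each $j\ne k$ with $w_{jk}\ne0$. A basin is a strongly connected component with no edge leaving it. $e_j$ is the $j$-th standard basis vector. $T_B(G_\Omega)$ is the set of spanning forests of $G_\Omega$ whose set of roots is exactly $N_B$: subgraphs containing all $n$ vertices, with no directed cycles, in which every vertex of $N_B$ has no outgoing edge and every vertex outside $N_B$ has exactly one outgoing edge (so each vertex has a directed path to a unique root in $N_B$). $T_B(G_\Omega,\eta,l)$ is the set of forests in $T_B(G_\Omega)$ in which vertex $l$ lies in a tree whose root is in $N_\eta$. For a forest $\tau$, $W(\tau)$ is the product of its edge weights, with $W(\tau)=1$ if $\tau$ has no edges. *)

From HB Require Import structures.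
From mathcomp Require Import all_boot all_order all_algebra.
From mathcomp Require Import complex.
From mathcomp Require Import all_classical all_reals all_analysis.
Set Implicit Arguments. Unset Strict Implicit. Unset Printing Implicit Defensive.
Import Order.TTheory GRing.Theory Num.Theory.
Local Open Scope ring_scope.
Local Open Scope complex_scope.

Section Defs.
Variable R : realType.
Variable n : nat.

Definition adjmx (A : 'M[R[i]]_n) : 'M[R[i]]_n := (map_mx conjc A)^T.

(* w_{jk} = sum_alpha Tr(pi_j L_alpha pi_k L_alpha^dagger); this trace is real,
   we take its real part to view it in R *)
Definition wgt (N : nat) (L : 'I_N -> 'M[R[i]]_n) (pi : 'I_n -> 'M[R[i]]_n)
    (j k : 'I_n) : R :=
  \sum_(a < N) complex.Re (\tr (pi j *m L a *m pi k *m adjmx (L a))).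

Definition Omega (w : 'I_n -> 'I_n -> R) : 'M[R]_n :=
  \matrix_(j, k) (if j == k then - \sum_(l | l != k) w l k else w j k).

Definition gedge (w : 'I_n -> 'I_n -> R) : rel 'I_n :=
  fun k j => (j != k) && (w j k != 0).

Definition is_basin (w : 'I_n -> 'I_n -> R) (S : {set 'I_n}) : bool :=
  [exists x, S == [set y | connect (gedge w) x y && connect (gedge w) y x]]
  && [forall k in S, forall j, gedge w k j ==> (j \in S)].

Definition basins (w : 'I_n -> 'I_n -> R) : {set {set 'I_n}} :=
  [set S | is_basin w S].

Definition NB (w : 'I_n -> 'I_n -> R) : {set 'I_n} :=
  \bigcup_(S in basins w) S.

(* A spanning forest with root set NB is encoded by its parent function:
   p v is the head of the unique outgoing edge of v (v outside NB),
   and p v = v for roots (no outgoing edge). *)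
Definition fedge (w : 'I_n -> 'I_n -> R) (p : {ffun 'I_n -> 'I_n}) : rel 'I_n :=
  fun u v => (u \notin NB w) && (p u == v).

Definition is_forest (w : 'I_n -> 'I_n -> R) (p : {ffun 'I_n -> 'I_n}) : bool :=
  [forall v, (v \in NB w) ==> (p v == v)]
  && [forall v, (v \notin NB w) ==> gedge w v (p v)]
  && [forall v, ~~ [exists u, fedge w p v u && connect (fedge w p) u v]].

Definition TB (w : 'I_n -> 'I_n -> R) : {set {ffun 'I_n -> 'I_n}} :=
  [set p | is_forest w p].

Definition TBl (w : 'I_n -> 'I_n -> R) (Neta : {set 'I_n}) (l : 'I_n)
    : {set {ffun 'I_n -> 'I_n}} :=
  [set p in TB w | [exists r in Neta, connect (fedge w p) l r]].

Definition Wf (w : 'I_n -> 'I_n -> R) (p : {ffun 'I_n -> 'I_n}) : R :=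
  \prod_(v | v \notin NB w) w (p v) v.

Definition evec (j : 'I_n) : 'cV[R]_n := delta_mx j 0.

Definition kappa (w : 'I_n -> 'I_n -> R) (Neta : {set 'I_n}) : 'cV[R]_n :=
  (\sum_(t in TB w) Wf w t) *: (\sum_(j in Neta) evec j)
  + \sum_(l | l \notin NB w) (\sum_(t in TBl w Neta l) Wf w t) *: evec l.

End Defs.

(* The coordinates of kappa_S are absorption weights: outside N_B, kappa_S(l) is the total
   weight of the spanning forests rooted at N_B in which l drains into S, and on N_B it is
   Z [l in S] with Z the total forest weight, which is the same thing since roots are fixed.
   Splitting a forest at a non-root vertex k into its remaining edges and the new parent m
   of k, redirecting k to m only changes the fate of the subtree of k, which then follows m;
   summing over m gives an antisymmetric double sum, so sum_j w_jk (kappa_S(j) - kappa_S(k))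
   vanishes, i.e. Omega^T kappa_S = 0.  At a basin vertex this holds because every edge stays
   in the basin.  Conversely the rates are nonnegative, so a vector in ker Omega^T is constant
   along the edges leaving a maximum, and every vertex reaches a basin: a kernel vector that
   vanishes at one vertex of each basin is zero.  Since Z > 0, subtracting the right
   combination of the kappa_S proves that they span, and evaluating at basin vertices that
   they are independent.  Finally d/dt kappa^T Lambda = (Omega^T kappa)^T Lambda = 0. *)

From HB Require Import structures.
From mathcomp Require Import all_boot all_order all_algebra.
From mathcomp Require Import complex.
From mathcomp Require Import all_classical all_reals all_analysis.
Import Order.TTheory GRing.Theory Num.Theory.
Set Implicit Arguments. Unset Strict Implicit. Unset Printing Implicit Defensive.
Local Open Scope ring_scope.

Section Reach.
Variable T : finType.

Inductive reach (p : T -> T) (A : {set T}) : T -> Prop :=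
| reach0 x of x \in A : reach p A x
| reachS x of reach p A (p x) : reach p A x.

Lemma reachE p A x : reach p A x <-> x \in A \/ reach p A (p x).
Proof. by split; [case=> y; [left|right] | case=> [/reach0|/reachS]]. Qed.

Lemma reach_fixed p A x : reach p A x -> p x = x -> x \in A.
Proof. by elim=> // y _ IH pyy; rewrite -pyy; apply: IH; rewrite !pyy. Qed.

Lemma reachU p A B x : reach p (A :|: B) x -> reach p A x \/ reach p B x.
Proof.
elim=> y; last by move=> _ [/reachS|/reachS]; [left|right].
by rewrite inE => /orP[/reach0|/reach0]; [left|right].
Qed.

Lemma reach_iter p A x t : reach p A (iter t p x) -> reach p A x.
Proof. by elim: t => //= t IH /reachS /IH. Qed.

Lemma iter_cycle (f : T -> T) x : exists a d, (0 < d)%N /\ iter d f (iter a f x) = iter a f x.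
Proof.
pose g (i : 'I_#|T|.+1) := iter i f x.
have /injectivePn[a [b neq gab]] : ~~ injectiveb g.
  by apply/negP => /injectiveP /leq_card; rewrite card_ord ltnn.
wlog ltab : a b neq gab / (a < b)%N.
  move=> W; case: (ltngtP a b) => [ab|ba|/val_inj eab]; first exact: (W a b).
    by apply: (W b a) => //; rewrite eq_sym.
  by rewrite eab eqxx in neq.
by exists a, (b - a)%N; rewrite subn_gt0 ltab -iterD subnK ?(ltnW ltab).
Qed.

End Reach.

Section Forest.
Variables (R : realType) (n : nat) (w : 'I_n -> 'I_n -> R).

Definition parent_map (p : {ffun 'I_n -> 'I_n}) :=
  forall v, (v \in NB w -> p v = v) /\ (v \notin NB w -> gedge w v (p v)).

Lemma connect_fedge_step p x y : connect (fedge w p) x y -> x != y ->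
  x \notin NB w /\ connect (fedge w p) (p x) y.
Proof.
case/connectP=> [[|z s]] /=; first by move=> _ ->; rewrite eqxx.
case/andP=> /andP[xNB /eqP pxz] pth ly _; split=> //.
by apply/connectP; exists s; rewrite pxz.
Qed.

Lemma connect_fedge_root p x y : x \in NB w -> connect (fedge w p) x y -> y = x.
Proof.
move=> xNB c; apply/eqP; rewrite eq_sym; apply/negP => /negP ne.
by have [] := connect_fedge_step c ne; rewrite xNB.
Qed.

Lemma connect_fedge_reach p (S : {set 'I_n}) l : parent_map p -> S \subset NB w ->
  (exists2 r, r \in S & connect (fedge w p) l r) <-> reach p S l.
Proof.
move=> pp sS; split.
  case=> r rS /connectP[s].
  elim: s l => [|z s IH] l /=; first by move=> _ <-; apply: reach0.
  by case/andP=> /andP[_ /eqP <-] pth lr; apply/reachS/IH.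
elim=> {l} [x xS|x _ [r rS c]]; first by exists x => //; apply: connect0.
exists r => //; have [xNB|xNB] := boolP (x \in NB w).
  by rewrite -((pp x).1 xNB).
by apply: connect_trans c; apply: connect1; rewrite /fedge xNB eqxx.
Qed.

Lemma acyclic_of_reach p : parent_map p -> (forall v, reach p (NB w) v) ->
  forall v, ~~ [exists u, fedge w p v u && connect (fedge w p) u v].
Proof.
move=> pp rall v; apply/negP => /existsP[u /andP[/andP[vNB /eqP pvu] cuv]].
pose on_cycle x := connect (fedge w p) v x /\ connect (fedge w p) x v.
have cycle_NB x : on_cycle x -> x \notin NB w.
  by case=> _ cxv; apply: contraNN vNB => xN; rewrite (connect_fedge_root xN cxv).
have cycle_step x : on_cycle x -> on_cycle (p x).
  move=> [cvx cxv]; have xN := cycle_NB x (conj cvx cxv); split.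
    by apply: connect_trans cvx _; apply: connect1; rewrite /fedge xN eqxx.
  have [exv|nxv] := eqVneq x v; first by rewrite exv pvu.
  by have [] := connect_fedge_step cxv nxv.
have off_cycle x : reach p (NB w) x -> ~ on_cycle x.
  elim=> {}x; first by move=> xN /cycle_NB; rewrite xN.
  by move=> _ IH /cycle_step.
by apply: (off_cycle v (rall v)); split; apply: connect0.
Qed.

Lemma reach_of_acyclic p : parent_map p ->
  (forall v, ~~ [exists u, fedge w p v u && connect (fedge w p) u v]) ->
  forall v, reach p (NB w) v.
Proof.
move=> pp acy v; apply: contrapT => nr.
have itN t : iter t p v \notin NB w.
  by apply/negP => /reach0 /reach_iter.
have connect_iter x s : (forall t, iter t p x \notin NB w) ->
    connect (fedge w p) x (iter s p x).
  move=> xN; elim: s => [|s IH] /=; first exact: connect0.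
  by apply: connect_trans IH _; apply: connect1; rewrite /fedge xN eqxx.
have [a [d [d_gt0 period]]] := iter_cycle p v.
pose u := iter a p v.
have : connect (fedge w p) (p u) (iter d.-1 p (p u)).
  by apply: connect_iter => t; rewrite -iterSr /u -iterD.
rewrite -iterSr prednK // period => c.
move/negP: (acy u); apply; apply/existsP; exists (p u).
by rewrite /fedge itN eqxx.
Qed.

Lemma forestP p : is_forest w p <-> parent_map p /\ forall v, reach p (NB w) v.
Proof.
split=> [|[pp rp]].
  case/andP=> /andP[/forallP rootP /forallP edgeP] /forallP acy.
  have pp : parent_map p.
    move=> v; split=> vN; first by apply/eqP; apply: (implyP (rootP v)).
    exact: (implyP (edgeP v)).
  by split=> //; apply: reach_of_acyclic.
apply/andP; split; last exact/forallP/acyclic_of_reach.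
apply/andP; split; apply/forallP => v; apply/implyP => vN.
  by rewrite (pp v).1.
exact: (pp v).2.
Qed.

End Forest.

Lemma sum_weighted_differences (R : comPzRingType) (I : finType) (c g : I -> R) :
  \sum_i c i * \sum_j c j * (g j - g i) = 0.
Proof.
have inner i : \sum_j c j * (g j - g i) = \sum_j c j * g j - (\sum_j c j) * g i.
  by rewrite mulr_suml -sumrB; apply: eq_bigr => j _; rewrite mulrBr.
under eq_bigr do rewrite inner mulrBr mulrCA.
by rewrite sumrB -mulr_suml -mulr_sumr mulrC subrr.
Qed.

Section Redirect.
Variables (R : realType) (n : nat) (w : 'I_n -> 'I_n -> R).

Definition redirect (q : {ffun 'I_n -> 'I_n}) (k m : 'I_n) : {ffun 'I_n -> 'I_n} :=
  [ffun v => if v == k then m else q v].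

Lemma redirectE q k m v : redirect q k m v = if v == k then m else q v.
Proof. by rewrite ffunE. Qed.

Lemma sum_redirect (P : pred {ffun 'I_n -> 'I_n}) (h : {ffun 'I_n -> 'I_n} -> R) k :
  \sum_(p | P p) h p =
  \sum_(q : {ffun 'I_n -> 'I_n} | q k == k) \sum_(m | P (redirect q k m)) h (redirect q k m).
Proof.
under [RHS]eq_bigr do rewrite big_mkcond.
rewrite big_mkcond [RHS]exchange_big /=.
rewrite (partition_big (fun p : {ffun 'I_n -> 'I_n} => p k) xpredT) //=.
apply: eq_bigr => m _.
rewrite (reindex_onto (fun q => redirect q k m) (fun p => redirect p k k)) /=.
  apply: eq_bigl => q; rewrite redirectE !eqxx /=.
  apply/eqP/eqP => [<-|qk]; first by rewrite !redirectE eqxx.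
  by apply/ffunP => v; rewrite !redirectE; case: eqVneq => // ->.
by move=> p /eqP pk; apply/ffunP => v; rewrite !redirectE; case: eqVneq => // ->.
Qed.

Definition parent_map_off (q : {ffun 'I_n -> 'I_n}) k :=
  forall v, v != k -> (v \in NB w -> q v = v) /\ (v \notin NB w -> gedge w v (q v)).

Definition ind_reach (p : {ffun 'I_n -> 'I_n}) (S : {set 'I_n}) j : R :=
  (`[< reach p S j >])%:R.

Section Redirected.
Variables (q : {ffun 'I_n -> 'I_n}) (k : 'I_n).
Hypotheses (kN : k \notin NB w) (qk : q k = k).

Lemma reach_root_fixed (A : {set 'I_n}) : k \notin A -> ~ reach q A k.
Proof. by move=> kA /reach_fixed /(_ qk); apply/negP. Qed.

Lemma reach_redirect (A : {set 'I_n}) m x : k \notin A ->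
  reach q A x -> reach (redirect q k m) A x.
Proof.
move=> kA; elim=> {}x; first exact: reach0.
move=> rq IH; have [exk|nxk] := eqVneq x k.
  by move: rq; rewrite exk qk => /(reach_root_fixed kA).
by apply: reachS; rewrite redirectE (negbTE nxk).
Qed.

Lemma forest_redirectP m : is_forest w (redirect q k m) <->
  (parent_map_off q k /\ forall v, reach q (NB w :|: [set k]) v) /\
  (gedge w k m /\ reach q (NB w) m).
Proof.
rewrite forestP; split=> [[pp rp]|[[pq rq] [km rm]]].
  have to_m x : reach (redirect q k m) (NB w) x -> reach q (NB w) x \/ reach q (NB w) m.
    elim=> {}x; first by left; apply: reach0.
    move=> _; rewrite redirectE; case: eqVneq => [_|_]; first by case; right.
    by case=> [/reachS|]; [left|right].
  split; split.
  - by move=> v vk; have := pp v; rewrite redirectE (negbTE vk).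
  - move=> v; elim: (rp v) => {}v; first by move=> vN; apply: reach0; rewrite inE vN.
    move=> _ IH; have [->|nvk] := eqVneq v k; first by apply: reach0; rewrite !inE eqxx orbT.
    by apply: reachS; move: IH; rewrite redirectE (negbTE nvk).
  - by have := (pp k).2 kN; rewrite redirectE eqxx.
  - by case: (to_m k (rp k)) => // /(reach_root_fixed kN).
split.
  move=> v; rewrite redirectE; case: eqVneq => [->|nvk]; last exact: pq.
  by rewrite (negbTE kN).
have rk : reach (redirect q k m) (NB w) k.
  by apply: reachS; rewrite redirectE eqxx; apply: reach_redirect.
move=> v; elim: (rq v) => {}v.
  by rewrite !inE => /orP[/reach0 //|/eqP ->].
move=> _ IH; have [->|nvk] := eqVneq v k; first exact: rk.
by apply: reachS; rewrite redirectE (negbTE nvk).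
Qed.

(* Once the parents of all vertices but k are fixed, the forests are indexed by the parents
   m of k that drain into N_B; the vertices that do not drain are those of the subtree of k. *)
Section Drained.
Hypotheses (pq : parent_map_off q k) (rq : forall v, reach q (NB w :|: [set k]) v).

Let drains m := `[< reach q (NB w) m >].
Let rate m := (gedge w k m && drains m)%:R * w m k.

Lemma redirect_fixed_NB m v : v \in NB w -> redirect q k m v = v.
Proof.
move=> vN; have vk : v != k by apply: contraNneq kN => <-.
by rewrite redirectE (negbTE vk) (pq vk).1.
Qed.

Lemma reach_redirect_drained m (S : {set 'I_n}) j : reach q (NB w) j ->
  (reach (redirect q k m) S j <-> reach q S j).
Proof.
elim=> {}j.
  move=> jN; have jk : j != k by apply: contraNneq kN => <-.
  split=> /reach_fixed H; apply/reach0/H; first exact: redirect_fixed_NB.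
  exact: (pq jk).1.
move=> rj IH; have [ejk|njk] := eqVneq j k.
  by move: rj; rewrite ejk qk => /(reach_root_fixed kN).
rewrite reachE [X in _ <-> X]reachE redirectE (negbTE njk).
by split; case=> H; [left|right; apply/IH|left|right; apply/IH].
Qed.

Lemma reach_redirect_through m (S : {set 'I_n}) j : S \subset NB w -> reach q [set k] j ->
  (reach (redirect q k m) S j <-> reach (redirect q k m) S m).
Proof.
move=> sS; have kS : k \notin S by apply: contraNN kN; apply: (fintype.subsetP sS).
have at_k : reach (redirect q k m) S k <-> reach (redirect q k m) S m.
  by rewrite reachE redirectE eqxx (negbTE kS); split; [case|right].
elim=> {}j; first by rewrite inE => /eqP ->.
move=> rj IH; have [->|njk] := eqVneq j k; first exact: at_k.
have jS : j \notin S.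
  apply/negP => /(fintype.subsetP sS) jN.
  by have := reach_fixed (reachS rj) ((pq njk).1 jN); rewrite inE (negbTE njk).
by rewrite reachE redirectE (negbTE njk) (negbTE jS) -IH; split; [case|right].
Qed.

Lemma in_TB_redirect m : (redirect q k m \in TB w) = gedge w k m && drains m.
Proof.
rewrite inE; apply/idP/andP => [/(forest_redirectP m)[_ [km rm]]|[km /asboolP rm]].
  by split=> //; apply/asboolP.
exact/(forest_redirectP m).
Qed.

Lemma Wf_redirect m :
  Wf w (redirect q k m) = w m k * \prod_(v | (v \notin NB w) && (v != k)) w (q v) v.
Proof.
rewrite /Wf (bigD1 k) //= redirectE eqxx; congr (_ * _).
by apply: eq_bigr => v /andP[_ vk]; rewrite redirectE (negbTE vk).
Qed.

Lemma ind_reach_redirect m (S : {set 'I_n}) j : S \subset NB w -> drains m ->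
  ind_reach (redirect q k m) S j =
  if drains j then ind_reach q S j else ind_reach q S m.
Proof.
move=> sS /asboolP rm; rewrite /ind_reach /drains.
have [rj|nrj] := asboolP (reach q (NB w) j).
  by rewrite (propext (reach_redirect_drained m S rj)).
have /reachU[//|rjk] := rq j.
rewrite (propext (reach_redirect_through m sS rjk)).
by rewrite (propext (reach_redirect_drained m S rm)).
Qed.

Lemma redirect_flux m (S : {set 'I_n}) : S \subset NB w -> drains m ->
  \sum_(j | j != k) w j k *
     (ind_reach (redirect q k m) S j - ind_reach (redirect q k m) S k) =
  \sum_j rate j * (ind_reach q S j - ind_reach q S m).
Proof.
move=> sS dm; have dk : ~~ drains k by apply/asboolP/reach_root_fixed.
rewrite [RHS](bigD1 k) //= {1}/rate /gedge eqxx /= !mul0r add0r.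
apply: eq_bigr => j jk; rewrite /rate /gedge jk !ind_reach_redirect // (negbTE dk) /=.
case: (drains j); last by rewrite subrr andbF mulr0 !mul0r.
by have [->|nz] := eqVneq (w j k) 0; rewrite ?mulr0 ?mul0r ?mul1r.
Qed.

Lemma sum_redirect_flux_drained (S : {set 'I_n}) : S \subset NB w ->
  \sum_(m | redirect q k m \in TB w) Wf w (redirect q k m) *
     \sum_(j | j != k) w j k *
       (ind_reach (redirect q k m) S j - ind_reach (redirect q k m) S k) = 0.
Proof.
move=> sS; pose Wk := \prod_(v | (v \notin NB w) && (v != k)) w (q v) v.
transitivity (Wk * \sum_m rate m * \sum_j rate j * (ind_reach q S j - ind_reach q S m)).
  rewrite big_mkcond mulr_sumr; apply: eq_bigr => m _; rewrite in_TB_redirect /rate.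
  case: ifP => [/andP[_ dm] | _]; last by rewrite !mul0r mulr0.
  by rewrite mul1r Wf_redirect redirect_flux // [w m k * Wk]mulrC -mulrA.
by rewrite sum_weighted_differences mulr0.
Qed.

End Drained.

Lemma sum_redirect_flux (S : {set 'I_n}) : S \subset NB w ->
  \sum_(m | redirect q k m \in TB w) Wf w (redirect q k m) *
     \sum_(j | j != k) w j k *
       (ind_reach (redirect q k m) S j - ind_reach (redirect q k m) S k) = 0.
Proof.
move=> sS.
have [[pq rq]|not_forest] :=
  asboolP (parent_map_off q k /\ forall v, reach q (NB w :|: [set k]) v).
  exact: sum_redirect_flux_drained.
by rewrite big_pred0 // => m; rewrite inE; apply/negP => /(forest_redirectP m)[/not_forest].
Qed.

End Redirected.

Definition forest_weight (S : {set 'I_n}) j : R :=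
  \sum_(p in TB w) Wf w p * ind_reach p S j.

Lemma forest_weight_harmonic k (S : {set 'I_n}) : k \notin NB w -> S \subset NB w ->
  \sum_(j | j != k) w j k * (forest_weight S j - forest_weight S k) = 0.
Proof.
move=> kN sS.
transitivity (\sum_(p in TB w) Wf w p *
  \sum_(j | j != k) w j k * (ind_reach p S j - ind_reach p S k)).
  under [RHS]eq_bigr do rewrite mulr_sumr.
  rewrite [RHS]exchange_big /=; apply: eq_bigr => j _.
  rewrite /forest_weight -sumrB mulr_sumr; apply: eq_bigr => p _.
  by rewrite -mulrBr mulrCA.
rewrite (sum_redirect (fun p => p \in TB w) _ k) big1 // => q /eqP qk.
exact: sum_redirect_flux.
Qed.

End Redirect.

Section Basins.
Variables (R : realType) (n : nat) (w : 'I_n -> 'I_n -> R).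

Definition scc x := [set y | connect (gedge w) x y && connect (gedge w) y x].

Lemma basin_scc S : S \in basins w -> exists x, S = scc x.
Proof. by rewrite inE => /andP[/existsP[x /eqP ->] _]; exists x. Qed.

Lemma basin_closed S k j : S \in basins w -> k \in S -> gedge w k j -> j \in S.
Proof.
rewrite inE => /andP[_ /forallP /(_ k)] /implyP closedS kS.
exact: (implyP (forallP (closedS kS) j)).
Qed.

Lemma scc_mem x r : r \in scc x -> scc r = scc x.
Proof.
rewrite inE => /andP[xr rx]; apply/setP => y; rewrite !inE.
apply/andP/andP => [[ry yr]|[xy yx]]; split.
- exact: connect_trans xr ry.
- exact: connect_trans yr rx.
- exact: connect_trans rx xy.
- exact: connect_trans yx xr.
Qed.

Lemma basin_inj S S' r : S \in basins w -> S' \in basins w -> r \in S -> r \in S' -> S = S'.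
Proof.
move=> /basin_scc[x ->] /basin_scc[x' ->] rS rS'.
by rewrite -(scc_mem rS) -(scc_mem rS').
Qed.

Lemma basin_connect S r r' : S \in basins w -> r \in S -> r' \in S -> connect (gedge w) r r'.
Proof.
move=> /basin_scc[x ->]; rewrite !inE => /andP[_ rx] /andP[xr' _].
exact: connect_trans rx xr'.
Qed.

Lemma basin_sub_NB S : S \in basins w -> S \subset NB w.
Proof. by move=> SB; apply/fintype.subsetP => r rS; apply/bigcupP; exists S. Qed.

Lemma basin_neq0 S : S \in basins w -> exists r, r \in S.
Proof. by case/basin_scc=> x ->; exists x; rewrite inE !connect0. Qed.

(* A vertex reached from v with the fewest reachable vertices lies in a basin. *)
Lemma connect_basin v :
  exists S, exists2 r, (S \in basins w) && (r \in S) & connect (gedge w) v r.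
Proof.
pose out x := #|[set y | connect (gedge w) x y]|.
have [u vu u_min] := @arg_minnP _ v (connect (gedge w) v) out (connect0 _ v).
have back y : connect (gedge w) u y -> connect (gedge w) y u.
  move=> uy.
  have sub : [set z | connect (gedge w) y z] \subset [set z | connect (gedge w) u z].
    by apply/fintype.subsetP => z; rewrite !inE; apply: connect_trans uy.
  have eq_out : out y = out u.
    by apply/eqP; rewrite eqn_leq subset_leq_card ?u_min //; apply: connect_trans vu uy.
  have : u \in [set z | connect (gedge w) y z].
    by rewrite (elimT (subset_cardP eq_out) sub) inE connect0.
  by rewrite inE.
exists (scc u); exists u => //.
rewrite !inE connect0 /= andbT; apply/andP; split; first by apply/existsP; exists u.
apply/forallP => k; apply/implyP; rewrite inE => /andP[uk ku].
apply/forallP => j; apply/implyP => kj; rewrite inE.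
have uj : connect (gedge w) u j by apply: connect_trans uk (connect1 kj).
by rewrite uj back.
Qed.

End Basins.

Section DescentForest.
Variables (R : realType) (n : nat) (w : 'I_n -> 'I_n -> R).

Fixpoint near_NB t : {set 'I_n} :=
  if t is t'.+1 then near_NB t' :|: [set v | [exists u in near_NB t', gedge w v u]]
  else NB w.

Lemma near_NB_exists v : exists t, v \in near_NB t.
Proof.
have [S [r /andP[SB rS] /connectP[s]]] := connect_basin w v.
elim: s v => [|z s IH] v /=.
  by move=> _ <-; exists 0%N; apply: (fintype.subsetP (basin_sub_NB SB)).
case/andP=> vz pth lr; have [t zt] := IH z pth lr.
by exists t.+1; rewrite /= !inE; apply/orP; right; apply/existsP; exists z; rewrite zt.
Qed.

Definition level v := ex_minn (near_NB_exists v).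

Lemma level_step v : v \notin NB w -> exists u, gedge w v u && (level u < level v)%N.
Proof.
move=> vN; rewrite /level; case: ex_minnP => [[|t]] /=; first by rewrite (negbTE vN).
rewrite inE => /orP[vt t_min|]; first by have := t_min t vt; rewrite ltnn.
rewrite inE => /existsP[u /andP[ut vu]] _; exists u; rewrite vu /=.
by case: ex_minnP => s _; apply.
Qed.

Definition descent : {ffun 'I_n -> 'I_n} :=
  [ffun v => if v \in NB w then v
             else odflt v [pick u | gedge w v u && (level u < level v)%N]].

Lemma descent_step v : v \notin NB w ->
  gedge w v (descent v) && (level (descent v) < level v)%N.
Proof.
move=> vN; rewrite ffunE (negbTE vN); case: pickP => [u //|none].
by have [u uP] := level_step vN; move: (none u); rewrite uP.
Qed.

Lemma descent_forest : is_forest w descent.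
Proof.
apply/forestP; split.
  move=> v; split=> vN; first by rewrite ffunE vN.
  by case/andP: (descent_step vN).
move=> v; have : (level v < (level v).+1)%N by [].
elim: (level v).+1 {-2}v => // N IH {}v lt_vN.
have [vB|vB] := boolP (v \in NB w); first exact: reach0.
apply: reachS; case/andP: (descent_step vB) => _ lt; apply: IH.
exact: leq_trans lt lt_vN.
Qed.

Hypothesis w_ge0 : forall j k, 0 <= w j k.

Lemma Wf_forest_gt0 p : is_forest w p -> 0 < Wf w p.
Proof.
case/forestP=> pp _; apply: prodr_gt0 => v vN.
by have /andP[_ nz] := (pp v).2 vN; rewrite lt_def nz w_ge0.
Qed.

Lemma sum_Wf_TB_gt0 : 0 < \sum_(t in TB w) Wf w t.
Proof.
rewrite (bigD1 descent) ?inE ?descent_forest //=.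
apply: (lt_le_trans (Wf_forest_gt0 descent_forest)); rewrite lerDl.
by apply: sumr_ge0 => p _; apply: prodr_ge0.
Qed.

End DescentForest.

Lemma sum_mul_indicator (R : pzSemiRingType) (I : finType) (P : pred I) (f : I -> R) i :
  \sum_(j | P j) f j * (i == j)%:R = if P i then f i else 0.
Proof.
rewrite big_mkcond (bigD1 i) //= eqxx mulr1 big1 ?addr0 => [|j ji].
  by case: (P i).
by rewrite eq_sym (negbTE ji) mulr0; case: (P j).
Qed.

Section Kernel.
Variables (R : realType) (n : nat) (w : 'I_n -> 'I_n -> R).

Lemma evecE (j i : 'I_n) : evec R j i 0 = (i == j)%:R.
Proof. by rewrite mxE eqxx andbT. Qed.

Lemma kappaE (S : {set 'I_n}) i : kappa w S i 0 =
  (\sum_(t in TB w) Wf w t) * (i \in S)%:R +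
  (if i \in NB w then 0 else \sum_(t in TBl w S i) Wf w t).
Proof.
rewrite !mxE !summxE; congr (_ * _ + _).
  rewrite (eq_bigr (fun j => 1 * (i == j)%:R)) ?sum_mul_indicator.
    by case: (i \in S).
  by move=> j _; rewrite evecE mul1r.
rewrite (eq_bigr (fun l => (\sum_(t in TBl w S l) Wf w t) * (i == l)%:R)).
  by rewrite sum_mul_indicator; case: (i \in NB w).
by move=> l _; rewrite !mxE eqxx andbT.
Qed.

Lemma kappa_NB (S : {set 'I_n}) i : i \in NB w ->
  kappa w S i 0 = (\sum_(t in TB w) Wf w t) * (i \in S)%:R.
Proof. by move=> iN; rewrite kappaE iN addr0. Qed.

Lemma kappa_forest_weight (S : {set 'I_n}) i : S \subset NB w ->
  kappa w S i 0 = forest_weight w S i.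
Proof.
move=> sS; rewrite kappaE /forest_weight.
have [iN|iN] := boolP (i \in NB w).
  rewrite addr0 mulr_suml; apply: eq_bigr => p /[!inE] /forestP[pp _].
  congr (_ * (nat_of_bool _)%:R).
  apply/idP/asboolP => [/reach0 //|/reach_fixed]; apply.
  exact: (pp i).1.
have iS : i \notin S by apply: contraNN iN; apply: (fintype.subsetP sS).
rewrite (negbTE iS) mulr0 add0r big_mkcond [RHS]big_mkcond.
apply: eq_bigr => p _; rewrite !inE.
case F: (is_forest w p) => //=; have [pp _] := iffLR (forestP w p) F.
rewrite /ind_reach.
have -> : `[< reach p S i >] = [exists r in S, connect (fedge w p) i r].
  apply/asboolP/existsP => [/(connect_fedge_reach i pp sS)[r rS c]|[r /andP[rS c]]].
    by exists r; rewrite rS.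
  by apply/(connect_fedge_reach i pp sS); exists r.
by case: ifP; rewrite ?mulr1 ?mulr0.
Qed.

Lemma Omega_trmx_mulE (y : 'cV[R]_n) k :
  ((Omega w)^T *m y) k 0 = \sum_(j | j != k) w j k * (y j 0 - y k 0).
Proof.
rewrite !mxE (bigD1 k) //= !mxE eqxx.
under [RHS]eq_bigr do rewrite mulrBr.
rewrite sumrB -mulr_suml mulNr addrC; congr (_ + _).
by apply: eq_bigr => j jk; rewrite !mxE (negbTE jk).
Qed.

Lemma kappa_in_kernel S : S \in basins w -> (Omega w)^T *m kappa w S = 0.
Proof.
move=> SB; have sS := basin_sub_NB SB.
apply/matrixP => k i; rewrite (ord1 i) [RHS]mxE Omega_trmx_mulE.
have [kN|kN] := boolP (k \in NB w); last first.
  under eq_bigr do rewrite !kappa_forest_weight //.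
  exact: forest_weight_harmonic.
have [S' S'B kS'] := bigcupP kN.
apply: big1 => j jk; have [->|wz] := eqVneq (w j k) 0; first by rewrite mul0r.
have jS' := basin_closed S'B kS' (introT andP (conj jk wz)).
have jN := fintype.subsetP (basin_sub_NB S'B) j jS'.
rewrite !kappa_NB //; suff -> : (j \in S) = (k \in S) by rewrite subrr mulr0.
apply/idP/idP => [jS|kS]; first by rewrite (basin_inj SB S'B jS jS').
by rewrite (basin_inj SB S'B kS kS').
Qed.

End Kernel.

Section MaximumPrinciple.
Variables (R : realType) (n : nat) (w : 'I_n -> 'I_n -> R).
Hypothesis w_ge0 : forall j k, 0 <= w j k.

Let Z := \sum_(t in TB w) Wf w t.
Let Z_neq0 : Z != 0. Proof. by rewrite gt_eqF // sum_Wf_TB_gt0. Qed.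

Lemma kernel_max_edge (y : 'cV[R]_n) k j : (Omega w)^T *m y = 0 ->
  (forall i, y i 0 <= y k 0) -> gedge w k j -> y j 0 = y k 0.
Proof.
move=> ker y_max /andP[jk wz].
have E0 := Omega_trmx_mulE w y k; rewrite ker mxE in E0.
have E : \sum_(i | i != k) w i k * (y k 0 - y i 0) = 0.
  have -> : \sum_(i | i != k) w i k * (y k 0 - y i 0) =
            - \sum_(i | i != k) w i k * (y i 0 - y k 0).
    by rewrite -sumrN; apply: eq_bigr => i _; rewrite -mulrN opprB.
  by rewrite -E0 oppr0.
have ge0 i : i != k -> 0 <= w i k * (y k 0 - y i 0).
  by move=> _; rewrite mulr_ge0 ?subr_ge0.
have /eqP := psumr_eq0P ge0 E jk.
by rewrite mulf_eq0 (negbTE wz) subr_eq0 => /eqP.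
Qed.

Lemma kernel_max_connect (y : 'cV[R]_n) u v : (Omega w)^T *m y = 0 ->
  (forall i, y i 0 <= y u 0) -> connect (gedge w) u v -> y v 0 = y u 0.
Proof.
move=> ker y_max /connectP[s].
elim: s u y_max => [|z s IH] u y_max /=; first by move=> _ ->.
case/andP=> uz pth lv; have yz := kernel_max_edge ker y_max uz.
by rewrite -yz; apply: IH pth lv => i; rewrite yz.
Qed.

Lemma kernel_le0 (y : 'cV[R]_n) : (Omega w)^T *m y = 0 ->
  (forall S, S \in basins w -> exists2 r, r \in S & y r 0 = 0) ->
  forall v, y v 0 <= 0.
Proof.
move=> ker vanish v.
have [u _ u_max] := @arg_maxP _ _ 'I_n v xpredT (fun i => y i 0) erefl.
have {}u_max i : y i 0 <= y u 0 by apply: u_max.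
have [S [r0 /andP[SB r0S] ur0]] := connect_basin w u.
have [r rS yr] := vanish S SB.
have ur : connect (gedge w) u r by apply: connect_trans ur0 (basin_connect SB r0S rS).
by rewrite -yr (kernel_max_connect ker u_max ur).
Qed.

Lemma kernel_eq0 (y : 'cV[R]_n) : (Omega w)^T *m y = 0 ->
  (forall S, S \in basins w -> exists2 r, r \in S & y r 0 = 0) -> y = 0.
Proof.
move=> ker vanish; apply/matrixP => i j; rewrite (ord1 j) mxE.
apply/eqP; rewrite eq_le kernel_le0 //=.
have ker' : (Omega w)^T *m (- y) = 0 by rewrite mulmxN ker oppr0.
have vanish' S : S \in basins w -> exists2 r, r \in S & (- y) r 0 = 0.
  by move=> /vanish[r rS yr]; exists r; rewrite // mxE yr oppr0.
by have := kernel_le0 ker' vanish' i; rewrite mxE oppr_le0.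
Qed.

Lemma sum_kappa_basin (c : {set 'I_n} -> R) S r : S \in basins w -> r \in S ->
  (\sum_(S' in basins w) c S' *: kappa w S') r 0 = c S * Z.
Proof.
move=> SB rS; have rN := fintype.subsetP (basin_sub_NB SB) r rS.
rewrite summxE (bigD1 S) //= big1 ?addr0 => [|S' /andP[S'B neq]].
  by rewrite mxE kappa_NB // rS mulr1.
rewrite mxE kappa_NB //; case: (boolP (r \in S')) => [rS'|_]; last by rewrite !mulr0.
by rewrite (basin_inj S'B SB rS' rS) eqxx in neq.
Qed.

Lemma kernel_span (x : 'cV[R]_n) : (Omega w)^T *m x = 0 ->
  exists c : {set 'I_n} -> R, x = \sum_(S in basins w) c S *: kappa w S.
Proof.
move=> ker.
pose c (S : {set 'I_n}) := if [pick r in S] is Some r then x r 0 / Z else 0.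
exists c; apply/eqP; rewrite -subr_eq0; apply/eqP/kernel_eq0.
  rewrite mulmxBr ker mulmx_sumr big1 ?subrr // => S SB.
  by rewrite -scalemxAr kappa_in_kernel // scaler0.
move=> S SB; have [r pick_r rS] : exists2 r, [pick r in S] = Some r & r \in S.
  by case: pickP => [r|none]; [exists r | have [r] := basin_neq0 SB; rewrite none].
by exists r; rewrite // !mxE (sum_kappa_basin c SB rS) /c pick_r divfK ?subrr.
Qed.

Lemma kappa_free (c : {set 'I_n} -> R) :
  \sum_(S in basins w) c S *: kappa w S = 0 -> forall S, S \in basins w -> c S = 0.
Proof.
move=> sum0 S SB; have [r rS] := basin_neq0 SB.
have := sum_kappa_basin c SB rS; rewrite sum0 mxE => /esym/eqP.
by rewrite mulf_eq0 (negbTE Z_neq0) orbF => /eqP.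
Qed.

End MaximumPrinciple.

Section Rates.
Local Open Scope complex_scope.
Variables (R : realType) (n : nat).

Lemma adjmxM (A B : 'M[R[i]]_n) : adjmx (A *m B) = adjmx B *m adjmx A.
Proof. by rewrite /adjmx map_mxM trmx_mul. Qed.

Lemma Re_trace_mul_adj_ge0 (M : 'M[R[i]]_n) : 0 <= complex.Re (\tr (M *m adjmx M)).
Proof.
have : 0 <= \tr (M *m adjmx M).
  apply: sumr_ge0 => i _; rewrite mxE; apply: sumr_ge0 => j _.
  by rewrite !mxE; apply: mulcJ_ge0.
by rewrite lecE => /andP[_].
Qed.

Lemma wgt_ge0 N (L : 'I_N -> 'M[R[i]]_n) (pi : 'I_n -> 'M[R[i]]_n) :
  (forall j, pi j *m pi j = pi j) -> (forall j, adjmx (pi j) = pi j) ->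
  forall j k, 0 <= wgt L pi j k.
Proof.
move=> proj herm j k; apply: sumr_ge0 => a _.
suff -> : \tr (pi j *m L a *m pi k *m adjmx (L a)) =
          \tr ((pi j *m L a *m pi k) *m adjmx (pi j *m L a *m pi k)).
  exact: Re_trace_mul_adj_ge0.
rewrite !adjmxM !herm !mulmxA [RHS]mxtrace_mulC !mulmxA proj.
by rewrite -(mulmxA _ (pi k) (pi k)) proj.
Qed.

End Rates.

Lemma kernel_conserved (R : realType) n (Om : 'M[R]_n) (kap : 'cV[R]_n)
    (Lam : R -> 'cV[R]_n) :
  Om^T *m kap = 0 ->
  (forall t (j : 'I_n), is_derive t (1 : R) (fun s => Lam s j ord0) ((Om *m Lam t) j ord0)) ->
  forall s t, kap^T *m Lam s = kap^T *m Lam t.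
Proof.
move=> ker D.
pose f := \sum_(j < n) (fun s : R => kap j 0 * Lam s j 0).
have fE s : f s = (kap^T *m Lam s) 0 0.
  by rewrite /f fct_sumE mxE; apply: eq_bigr => j _; rewrite mxE.
have Df t : is_derive t (1 : R) f 0.
  have flux0 : \sum_(j < n) kap j 0 * (Om *m Lam t) j 0 = 0.
    transitivity ((kap^T *m (Om *m Lam t)) 0 0).
      by rewrite [RHS]mxE; apply: eq_bigr => j _; rewrite [kap^T _ _]mxE.
    by rewrite mulmxA -[Om]trmxK -trmx_mul ker trmx0 mul0mx mxE.
  by rewrite -flux0; apply: is_derive_sum => j; apply: is_deriveZ.
move=> s t; apply/matrixP => i j; rewrite (ord1 i) (ord1 j) -!fE.
exact: is_derive_0_is_cst.
Qed.

Theorem mainTheorem4 (R : realType) (n N : nat) (n_gt0 : (0 < n)%N)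
    (L : 'I_N -> 'M[R[i]]_n) (pi : 'I_n -> 'M[R[i]]_n)
    (pi_proj : forall j, pi j *m pi j = pi j)
    (pi_herm : forall j, adjmx (pi j) = pi j)
    (pi_rank1 : forall j, \rank (pi j) = 1%N)
    (pi_orth : forall j k, j != k -> pi j *m pi k = 0) :
  let w := wgt L pi in
  let Om := Omega w in
  (* the kappa_eta span ker Omega^T *)
  (forall x : 'cV[R]_n, Om^T *m x = 0 <->
     exists c : {set 'I_n} -> R, x = \sum_(S in basins w) c S *: kappa w S)
  (* the kappa_eta are linearly independent *)
  /\ (forall c : {set 'I_n} -> R,
        \sum_(S in basins w) c S *: kappa w S = 0 ->
        forall S, S \in basins w -> c S = 0)
  (* conserved quantities *)
  /\ (forall Lam : R -> 'cV[R]_n,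
        (forall t (j : 'I_n), is_derive t (1 : R) (fun s => Lam s j ord0)
                                         ((Om *m Lam t) j ord0)) ->
        forall S, S \in basins w ->
        forall s t, (kappa w S)^T *m Lam s = (kappa w S)^T *m Lam t).
Proof.
move=> w Om.
have w_ge0 : forall j k, 0 <= w j k by apply: wgt_ge0.
split; [|split].
- move=> x; split; first exact: kernel_span.
  case=> c ->; rewrite mulmx_sumr big1 // => S SB.
  by rewrite -scalemxAr kappa_in_kernel // scaler0.
- exact: kappa_free.
- by move=> Lam D S SB; apply: kernel_conserved D; apply: kappa_in_kernel.
Qed.
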